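(* Let $\xi_1=0$ and $\xi_{n+1}=\eta_{\xi_n}(\cos(2\pi/9))$ for $n\ge1$. Then the sequence $\{\xi_n\}_{n\ge1}$ is increasing (nondecreasing) in $n$, and its limit $\xi_\infty:=\lim_{n\to\infty}\xi_n$ satisfies $0.125\le\xi_\infty\le0.13$.
   Context: For $\xi\ge0$ and $y\in(0,1)$, $\eta_\xi(y)$ is the unique positive root $\delta$ of $(2+y)\delta^2+2(2+5y-(1+\xi)^2)\delta-4(1-y)(1+\xi)^2=0$, i.e. $\eta_\xi(y)=\frac{-2-5y+(1+\xi)^2+\sqrt{(2+5y-(1+\xi)^2)^2+4(2+y)(1-y)(1+\xi)^2}}{2+y}$. *)

From Stdlib Require Import Reals Lra.
Open Scope R_scope.

(* eta_xi(y): the unique positive root delta of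
   (2+y) d^2 + 2(2+5y-(1+xi)^2) d - 4(1-y)(1+xi)^2 = 0, given by the
   explicit formula from the paper. *)
Definition eta (xi y : R) : R :=
  (-2 - 5*y + (1+xi)^2
   + sqrt ((2 + 5*y - (1+xi)^2)^2 + 4*(2+y)*(1-y)*(1+xi)^2)) / (2 + y).

(* xi_1 = 0, xi_{n+1} = eta_{xi_n}(cos(2 pi/9)); indexed from 0: xi_seq 0 = xi_1. *)
Fixpoint xi_seq (n : nat) : R :=
  match n with
  | O => 0
  | S m => eta (xi_seq m) (cos (2*PI/9))
  end.

(* eta_xi(c) is the positive root of the quadratic q_xi(d) = eta_poly c xi d, and
   q_xi(0) < 0, so it is the least d >= 0 with q_xi(d) >= 0.  Since q_xi(d)
   decreases in xi for d >= 0, eta is nondecreasing in xi, and q_{0.13}(0.13) >= 0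
   gives eta_{0.13} <= 0.13; hence the iterates from 0 increase and stay below 0.13.
   By continuity of eta the limit l is a fixed point, i.e. q_l(l) = 0, whereas
   q_l(l) < 0 on [0, 1/8). *)
From Stdlib Require Import Reals Lra Lia Psatz.
Open Scope R_scope.

Definition eta_poly (c xi d : R) : R :=
  (2+c)*d^2 + 2*(2+5*c-(1+xi)^2)*d - 4*(1-c)*(1+xi)^2.

Section Eta.

Variable c : R.
Hypothesis Hc : -2 < c < 1.

Lemma eta_discriminant_nonneg (xi : R) :
  0 <= (2 + 5*c - (1+xi)^2)^2 + 4*(2+c)*(1-c)*(1+xi)^2.
Proof.
  assert (0 <= (2+c)*(1-c)) by nra.
  assert (0 <= (1+xi)^2) by apply pow2_ge_0.
  assert (0 <= (2 + 5*c - (1+xi)^2)^2) by apply pow2_ge_0.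
  nra.
Qed.

Lemma abs_lt_sqrt_eta_discriminant (xi : R) : 0 <= xi ->
  Rabs (2 + 5*c - (1+xi)^2)
  < sqrt ((2 + 5*c - (1+xi)^2)^2 + 4*(2+c)*(1-c)*(1+xi)^2).
Proof.
  intros Hxi. rewrite <- sqrt_Rsqr_abs.
  apply sqrt_lt_1_alt. split; [apply Rle_0_sqr|].
  assert (0 < (1+xi)^2) by nra. assert (0 < (2+c)*(1-c)) by nra.
  unfold Rsqr. nra.
Qed.

Lemma eta_root (xi : R) : eta_poly c xi (eta xi c) = 0.
Proof.
  unfold eta, eta_poly.
  set (B := 2 + 5*c - (1+xi)^2).
  pose proof (eta_discriminant_nonneg xi) as HD; fold B in HD.
  set (D := B^2 + 4*(2+c)*(1-c)*(1+xi)^2) in *.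
  replace (-2 - 5*c + (1+xi)^2) with (-B) by (unfold B; ring).
  assert (Hs : sqrt D * sqrt D = D) by (apply sqrt_sqrt; lra).
  transitivity ((sqrt D * sqrt D - D) / (2+c)).
  - unfold D, B. field. lra.
  - rewrite Hs. unfold Rdiv. ring.
Qed.

Lemma eta_le (xi d : R) :
  0 <= xi -> 0 <= d -> 0 <= eta_poly c xi d -> eta xi c <= d.
Proof.
  intros Hxi Hd Hq. unfold eta. unfold eta_poly in Hq.
  set (B := 2 + 5*c - (1+xi)^2) in *.
  pose proof (eta_discriminant_nonneg xi) as HD; fold B in HD.
  set (D := B^2 + 4*(2+c)*(1-c)*(1+xi)^2) in *.
  replace (-2 - 5*c + (1+xi)^2) with (-B) by (unfold B; ring).
  pose proof (Rabs_def2 _ _ (abs_lt_sqrt_eta_discriminant xi Hxi)) as [_ HsB].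
  fold B D in HsB.
  assert (Hs : sqrt D * sqrt D = D) by (apply sqrt_sqrt; lra).
  pose proof (sqrt_pos D) as Hs0.
  (* [(2+c) eta_poly c xi d = ((2+c) d + B)^2 - D] *)
  assert (Hsq : ((2+c)*d + B)^2 >= D) by (unfold D; nra).
  apply (Rmult_le_reg_r (2+c)); [lra|].
  unfold Rdiv. rewrite Rmult_assoc, Rinv_l, Rmult_1_r by lra.
  destruct (Rle_or_lt 0 ((2+c)*d + B)); nra.
Qed.

Lemma eta_nonneg (xi : R) : 0 <= xi -> 0 <= eta xi c.
Proof.
  intros Hxi. unfold eta.
  pose proof (Rabs_def2 _ _ (abs_lt_sqrt_eta_discriminant xi Hxi)).
  apply Rmult_le_pos; [lra | left; apply Rinv_0_lt_compat; lra].
Qed.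

Lemma eta_poly_antitone (x y d : R) :
  0 <= x <= y -> 0 <= d -> eta_poly c y d <= eta_poly c x d.
Proof.
  intros Hxy Hd. unfold eta_poly.
  assert (0 <= ((1+y)^2 - (1+x)^2) * (2*d + 4*(1-c))) by (apply Rmult_le_pos; nra).
  nra.
Qed.

Lemma eta_monotone (x y : R) : 0 <= x <= y -> eta x c <= eta y c.
Proof.
  intros Hxy.
  apply eta_le; [lra | apply eta_nonneg; lra|].
  rewrite <- (eta_root y).
  apply eta_poly_antitone; [lra | apply eta_nonneg; lra].
Qed.

Lemma eta_continuous (x : R) : continuity_pt (fun xi => eta xi c) x.
Proof.
  unfold eta.
  apply continuity_pt_div; [| apply continuity_pt_const; intros ? ?; reflexivity | lra].
  apply continuity_pt_plus; [reg|].
  apply (continuity_pt_comp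
           (fun xi => (2 + 5*c - (1+xi)^2)^2 + 4*(2+c)*(1-c)*(1+xi)^2) sqrt); [reg|].
  apply continuity_pt_sqrt, eta_discriminant_nonneg.
Qed.

End Eta.

Lemma Un_cv_const (k : R) : Un_cv (fun _ => k) k.
Proof.
  intros e He. exists 0%nat. intros n _.
  unfold Rdist. rewrite Rminus_diag, Rabs_R0. lra.
Qed.

Lemma Un_cv_succ (u : nat -> R) (l : R) : Un_cv u l -> Un_cv (fun n => u (S n)) l.
Proof.
  intros Hu e He. destruct (Hu e He) as [N HN].
  exists N. intros n Hn. apply HN. lia.
Qed.

Section Iteration.

Variables (f : R -> R) (b : R) (u : nat -> R).
Hypothesis u_0 : u 0%nat = 0.
Hypothesis u_S : forall n, u (S n) = f (u n).
Hypothesis f_monotone : forall x y, 0 <= x <= y -> y <= b -> f x <= f y.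
Hypothesis b_nonneg : 0 <= b.
Hypothesis f_0 : 0 <= f 0.
Hypothesis f_b : f b <= b.

Lemma iterate_bounds (n : nat) : 0 <= u n <= u (S n) /\ u (S n) <= b.
Proof.
  assert (Hb : f 0 <= f b) by (apply f_monotone; lra).
  induction n as [|n [[H0 Hn] Hnb]].
  - rewrite u_S, u_0. lra.
  - assert (f (u n) <= f (u (S n))) by (apply f_monotone; lra).
    assert (f (u (S n)) <= f b) by (apply f_monotone; lra).
    rewrite !u_S in *. lra.
Qed.

Lemma iterate_cv_fixed_point :
  (forall x, continuity_pt f x) ->
  exists l, Un_cv u l /\ 0 <= l <= b /\ f l = l.
Proof.
  intros f_cont.
  destruct (growing_cv u) as [l Hl].
  - intro n. apply iterate_bounds.
  - exists b. intros x [n ->]. destruct n as [|n]; [rewrite u_0; lra | apply (iterate_bounds n)].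
  - exists l. split; [exact Hl | split].
    + split.
      * rewrite <- u_0. apply (growing_ineq u); [intro n; apply iterate_bounds | exact Hl].
      * apply (Rle_cv_lim (Un := fun n => u (S n)) (Vn := fun _ => b));
          [| apply Un_cv_succ, Hl | apply Un_cv_const].
        intro n. apply iterate_bounds.
    + apply (UL_sequence (fun n => u (S n))); [| apply Un_cv_succ, Hl].
      apply (Un_cv_ext (fun n => f (u n))); [intro n; symmetry; apply u_S|].
      apply continuity_seq; auto.
Qed.

End Iteration.

Lemma cos_2PI_9_bounds : 766044/1000000 <= cos (2*PI/9) <= 766045/1000000.
Proof.
  set (x := 2*PI/9).
  pose proof PI_RGT_0.
  assert (Hgt : 1/2 < cos x).
  { rewrite <- cos_PI3. apply cos_decreasing_1; unfold x; lra. }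
  assert (H3 : cos (3*x) = -1/2).
  { replace (3*x) with (PI - PI/3) by (unfold x; field).
    rewrite Rtrigo_facts.cos_pi_minus, cos_PI3. lra. }
  assert (Htriple : cos (3*x) = 4*(cos x)^3 - 3*cos x).
  { replace (3*x) with (2*x + x) by ring.
    rewrite cos_plus, cos_2a_cos, sin_2a.
    pose proof (sin2 x) as Hs. unfold Rsqr in Hs. nra. }
  rewrite H3 in Htriple. set (c := cos x) in *.
  split; destruct (Rle_dec c (766045/1000000)); nra.
Qed.

Lemma eta_poly_diag_13_nonneg (c : R) :
  766044/1000000 <= c -> 0 <= eta_poly c (13/100) (13/100).
Proof. intros Hc. unfold eta_poly. lra. Qed.

(* The limit is 0.1250044..., so this bound is tight: it needs [c] to six digits. *)
Lemma eta_poly_diag_neg (c l : R) :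
  c <= 766045/1000000 -> 0 <= l < 1/8 -> eta_poly c l l < 0.
Proof.
  intros Hc Hl. unfold eta_poly.
  assert (0 <= (766045/1000000 - c) * (l*l + 10*l + 4*(1+l)^2))
    by (apply Rmult_le_pos; nra).
  assert (0 <= (1/8 - l)*l) by nra.
  assert (0 <= (1/8 - l)*l*l) by nra.
  nra.
Qed.

Theorem lemma4p6 :
  (forall n : nat, xi_seq n <= xi_seq (S n)) /\
  exists l : R, Un_cv xi_seq l /\ 1/8 <= l <= 13/100.
Proof.
  pose proof cos_2PI_9_bounds as Hc_bounds.
  set (c := cos (2*PI/9)) in *.
  assert (Hc : -2 < c < 1) by lra.
  assert (Hmono : forall x y, 0 <= x <= y -> y <= 13/100 -> eta x c <= eta y c)
    by (intros; apply eta_monotone; lra).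
  assert (H0 : 0 <= eta 0 c) by (apply eta_nonneg; lra).
  assert (Hb : eta (13/100) c <= 13/100)
    by (apply eta_le, eta_poly_diag_13_nonneg; lra).
  assert (Hb0 : 0 <= 13/100) by lra.
  pose proof (iterate_bounds (fun x => eta x c) (13/100) xi_seq
                eq_refl (fun n => eq_refl) Hmono Hb0 H0 Hb) as Hbounds.
  destruct (iterate_cv_fixed_point (fun x => eta x c) (13/100) xi_seq
              eq_refl (fun n => eq_refl) Hmono Hb0 H0 Hb (eta_continuous c Hc))
    as (l & Hl & Hlb & Hfix).
  split; [intro n; apply Hbounds|].
  exists l. split; [exact Hl | split; [| apply Hlb]].
  destruct (Rlt_or_le l (1/8)) as [Hlt|]; [exfalso | assumption].
  pose proof (eta_root c Hc l) as Hroot. rewrite Hfix in Hroot.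
  pose proof (eta_poly_diag_neg c l ltac:(lra) ltac:(lra)). lra.
Qed.
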